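(* Let $(\mathcal{P},\cdot)$ be an admissible Poisson algebra and let $e_1,e_2$ be non-zero idempotents with $e_1\cdot e_2=e_2\cdot e_1=0$. For $k=1,2$ and $i\in\{0,1\}$ put $\mathcal{P}^k_{i,i}=\{x\in\mathcal{P}: e_k\cdot x=x\cdot e_k=ix\}$. Then $\mathcal{P}$ is the direct sum of subalgebras $$\mathcal{P}=\big(\mathcal{P}^1_{0,0}\cap\mathcal{P}^2_{0,0}\big)\oplus\mathcal{P}^1_{1,1}\oplus\mathcal{P}^2_{1,1}.$$
   Context: $\mathbb{K}$ is a field of characteristic different from $2$ and $3$. Associator: $A(X,Y,Z)=(X\cdot Y)\cdot Z-X\cdot(Y\cdot Z)$. An admissible Poisson algebra is a $\mathbb{K}$-vector space $\mathcal{P}$ with a bilinear product $\cdot$ satisfying $3A(X,Y,Z)=(X\cdot Z)\cdot Y+(Y\cdot Z)\cdot X-(Y\cdot X)\cdot Z-(Z\cdot X)\cdot Y$ for all $X,Y,Z$. An idempotent is $e$ with $e\cdot e=e$. *)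

From HB Require Import structures.
From mathcomp Require Import all_boot all_order all_algebra.
Set Implicit Arguments. Unset Strict Implicit. Unset Printing Implicit Defensive.
Import GRing.Theory.
Local Open Scope ring_scope.

Definition bilinear_prod (K : fieldType) (V : lmodType K) (mul : V -> V -> V) : Prop :=
  (forall (a : K) (x y z : V), mul (a *: x + y) z = a *: mul x z + mul y z) /\
  (forall (a : K) (x y z : V), mul z (a *: x + y) = a *: mul z x + mul z y).

Definition associator (K : fieldType) (V : lmodType K) (mul : V -> V -> V) (x y z : V) : V :=
  mul (mul x y) z - mul x (mul y z).

Definition admissible_poisson (K : fieldType) (V : lmodType K) (mul : V -> V -> V) : Prop :=
  bilinear_prod mul /\
  forall x y z : V,
    (3%:R : K) *: associator mul x y z =
      mul (mul x z) y + mul (mul y z) x - mul (mul y x) z - mul (mul z x) y.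

Definition is_idempotent (K : fieldType) (V : lmodType K) (mul : V -> V -> V) (e : V) : Prop :=
  mul e e = e.

Definition peirce_space (K : fieldType) (V : lmodType K) (mul : V -> V -> V)
  (e : V) (i : K) : V -> Prop :=
  fun x => mul e x = i *: x /\ mul x e = i *: x.

Definition subalgebra (K : fieldType) (V : lmodType K) (mul : V -> V -> V) (S : V -> Prop) : Prop :=
  S 0 /\ (forall (a : K) (x y : V), S x -> S y -> S (a *: x + y)) /\
  (forall x y : V, S x -> S y -> S (mul x y)).

Definition direct_sum3 (K : fieldType) (V : lmodType K) (A B C : V -> Prop) : Prop :=
  forall v : V,
    (exists a b c, [/\ A a, B b, C c & v = a + b + c]) /\
    (forall a b c a' b' c', A a -> B b -> C c -> A a' -> B b' -> C c' ->
        v = a + b + c -> v = a' + b' + c' -> [/\ a = a', b = b' & c = c']).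

From HB Require Import structures.
From mathcomp Require Import all_boot all_order all_algebra.
Set Implicit Arguments. Unset Strict Implicit. Unset Printing Implicit Defensive.
Import GRing.Theory.
Local Open Scope ring_scope.

(* An admissible product is flexible, and an element commuting with everything
   associates on the left with everything, so everything reduces to showing
   that an idempotent e commutes with everything.  Writing
   [sym x = ex + xe] and [ad x = ex - xe], the defining identity at (e,e,x)
   and (x,e,e) gives [ad (sym x) = ad x] and [sym (sym x) = 2 sym x]
   (Leibniz rule and associativity of the underlying Poisson structure), so
   [ad x = ad (sym (sym x)) = 2 ad x] and [ad x = 0].  Then e acts as a
   projection, the Peirce spaces are subalgebras, and for orthogonal
   idempotents [v = (v - e1 v - e2 v) + e1 v + e2 v] is the unique
   decomposition. *)

Lemma mulrn_eq0_lmod (F : fieldType) (W : lmodType F) n (v : W) :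
  n%:R != 0 :> F -> (v *+ n == 0) = (v == 0).
Proof. by move=> n_neq0; rewrite -scaler_nat scaler_eq0 (negPf n_neq0). Qed.

Lemma subalgebraI (K : fieldType) (V : lmodType K) (mul : V -> V -> V)
    (A B : V -> Prop) :
  subalgebra mul A -> subalgebra mul B -> subalgebra mul (fun x => A x /\ B x).
Proof.
move=> [A0 [AD AM]] [B0 [BD BM]]; split=> //.
by split=> [a x y [Ax Bx] [Ay By] | x y [Ax Bx] [Ay By]]; split; auto.
Qed.

Section BilinearProduct.

Variables (K : fieldType) (V : lmodType K) (mul : V -> V -> V).
Hypothesis mul_bilinear : bilinear_prod mul.

Lemma mulDl x y z : mul (x + y) z = mul x z + mul y z.
Proof. by have := mul_bilinear.1 1 x y z; rewrite !scale1r. Qed.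

Lemma mulDr x y z : mul z (x + y) = mul z x + mul z y.
Proof. by have := mul_bilinear.2 1 x y z; rewrite !scale1r. Qed.

Lemma mul0l z : mul 0 z = 0.
Proof. by apply: (addIr (mul 0 z)); rewrite -mulDl !add0r. Qed.

Lemma mul0r z : mul z 0 = 0.
Proof. by apply: (addIr (mul z 0)); rewrite -mulDr !add0r. Qed.

Lemma mulZl a x z : mul (a *: x) z = a *: mul x z.
Proof. by rewrite -[a *: x]addr0 mul_bilinear.1 mul0l addr0. Qed.

Lemma mulZr a x z : mul z (a *: x) = a *: mul z x.
Proof. by rewrite -[a *: x]addr0 mul_bilinear.2 mul0r addr0. Qed.

Lemma mulNr x z : mul z (- x) = - mul z x.
Proof. by rewrite -scaleN1r mulZr scaleN1r. Qed.

Lemma mulBr x y z : mul z (x - y) = mul z x - mul z y.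
Proof. by rewrite mulDr mulNr. Qed.

Section Admissible.

Hypothesis mul_admissible : forall x y z,
  (3%:R : K) *: associator mul x y z =
    mul (mul x z) y + mul (mul y z) x - mul (mul y x) z - mul (mul z x) y.
Hypotheses (two_neq0 : 2%:R != 0 :> K) (three_neq0 : 3%:R != 0 :> K).

Let four_neq0 : 4%:R != 0 :> K.
Proof. by rewrite -[4%N]/(2 * 2)%N natrM mulf_neq0. Qed.

Lemma admissibleE x y z :
  (mul (mul x y) z - mul x (mul y z)) *+ 3 =
  mul (mul x z) y + mul (mul y z) x - mul (mul y x) z - mul (mul z x) y.
Proof. by rewrite -mul_admissible /associator scaler_nat. Qed.

Lemma mul_flexible x y : mul (mul x y) x = mul x (mul y x).
Proof.
apply/eqP; rewrite -subr_eq0 -(mulrn_eq0_lmod _ three_neq0).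
by rewrite admissibleE addrK subrr.
Qed.

Lemma commuting_mulA e x y :
  (forall v, mul v e = mul e v) -> mul (mul e x) y = mul e (mul x y).
Proof.
move=> eC; apply/eqP; rewrite -subr_eq0 -(mulrn_eq0_lmod _ four_neq0) mulrSr.
rewrite admissibleE !eC [X in X + _]addrAC [_ + mul e _]addrC addrK.
by rewrite addrA subrK subrr.
Qed.

Section Idempotent.

Variable e : V.
Hypothesis e_idem : is_idempotent mul e.

Let ad x := mul e x - mul x e.
Let sym x := mul e x + mul x e.

Lemma ad_sym x : ad (sym x) = ad x.
Proof.
have A := admissibleE e e x; have B := admissibleE x e e.
rewrite e_idem in A B.
have : (mul e x - mul e (mul e x) + (mul (mul x e) e - mul x e)) *+ 3 = 0.
  by rewrite mulrnDl A B; apply/eqP; rewrite addr_eq0 !opprB addrA opprD addrA addrAC.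
move/eqP; rewrite (mulrn_eq0_lmod _ three_neq0) => /eqP sum0.
rewrite /ad /sym mulDr mulDl -mul_flexible opprD addrA addrK.
move: sum0; rewrite addrACA [- _ - _]addrC -addrACA => sum0.
by apply/eqP; rewrite eq_sym -subr_eq0 opprB sum0.
Qed.

Lemma mul_sym_idem_r x : mul (sym x) e *+ 2 = mul e x + mul x e *+ 3.
Proof.
have := admissibleE x e e; rewrite e_idem => /eqP.
rewrite eq_sym !subr_eq mulrnBl => /eqP B.
rewrite mulDl; apply: (addrI (mul (mul x e) e)).
rewrite [RHS]addrA B [_ - _ + _]addrAC [_ - _ + _]addrAC subrK -addrA -mulr2n.
by rewrite mulrS -addrA mulrnDl [_ *+ 2 + _]addrC.
Qed.

Lemma sym_sym x : sym (sym x) = sym x *+ 2.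
Proof.
have := ad_sym x; rewrite {1}/ad => /eqP; rewrite subr_eq => /eqP Le.
rewrite {1}/sym Le -addrA -mulr2n mul_sym_idem_r /sym /ad.
by rewrite mulrS addrCA [_ - _ + _]addrA subrK addrA -mulr2n mulrnDl.
Qed.

Lemma idem_commute x : mul x e = mul e x.
Proof.
have ad_mulr2n v : ad (v *+ 2) = ad v *+ 2.
  by rewrite /ad !mulr2n mulDr mulDl opprD addrACA.
have : ad x = ad x *+ 2 by rewrite -{1}ad_sym -{1}ad_sym sym_sym ad_mulr2n ad_sym.
rewrite mulr2n -{1}[ad x]addr0 => /addrI/esym/eqP.
by rewrite subr_eq0 => /eqP.
Qed.

Lemma idem_mulA x y : mul (mul e x) y = mul e (mul x y).
Proof. exact: commuting_mulA idem_commute. Qed.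

Lemma idem_mulK x : mul e (mul e x) = mul e x.
Proof. by rewrite -idem_mulA e_idem. Qed.

Lemma idem_mul_orthogonal f x : mul e f = 0 -> mul e (mul f x) = 0.
Proof. by move=> ef0; rewrite -idem_mulA ef0 mul0l. Qed.

Lemma peirce_spaceE i x : peirce_space mul e i x <-> mul e x = i *: x.
Proof. by rewrite /peirce_space idem_commute; split=> [[]|]. Qed.

Lemma peirce_space0E x : peirce_space mul e 0 x <-> mul e x = 0.
Proof. by rewrite -(scale0r x); apply: peirce_spaceE. Qed.

Lemma peirce_space1E x : peirce_space mul e 1 x <-> mul e x = x.
Proof. by rewrite -[X in _ = X](scale1r x); apply: peirce_spaceE. Qed.

Lemma peirce_subalgebra i : subalgebra mul (peirce_space mul e i).
Proof.
split; first by apply/peirce_spaceE; rewrite mul0r scaler0.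
split=> [a x y /peirce_spaceE ex /peirce_spaceE ey | x y /peirce_spaceE ex _];
  apply/peirce_spaceE.
  by rewrite mulDr mulZr ex ey scalerDr !scalerA mulrC.
by rewrite -idem_mulA ex mulZl.
Qed.

End Idempotent.

Section OrthogonalIdempotents.

Variables e1 e2 : V.
Hypotheses (e1_idem : is_idempotent mul e1) (e2_idem : is_idempotent mul e2).
Hypotheses (e1e2 : mul e1 e2 = 0) (e2e1 : mul e2 e1 = 0).

Let P00 x := peirce_space mul e1 0 x /\ peirce_space mul e2 0 x.

Lemma peirce_components a b c :
  P00 a -> peirce_space mul e1 1 b -> peirce_space mul e2 1 c ->
  mul e1 (a + b + c) = b /\ mul e2 (a + b + c) = c.
Proof.
move=> [/(peirce_space0E e1_idem) e1a /(peirce_space0E e2_idem) e2a].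
move=> /(peirce_space1E e1_idem) e1b /(peirce_space1E e2_idem) e2c.
have e1c : mul e1 c = 0 by rewrite -e2c idem_mul_orthogonal.
have e2b : mul e2 b = 0 by rewrite -e1b idem_mul_orthogonal.
by rewrite !mulDr e1a e2a e1b e2c e1c e2b !add0r addr0.
Qed.

Lemma peirce_direct_sum :
  direct_sum3 P00 (peirce_space mul e1 1) (peirce_space mul e2 1).
Proof.
move=> v; split.
  exists (v - mul e1 v - mul e2 v), (mul e1 v), (mul e2 v); split.
  - split; [apply/(peirce_space0E e1_idem) | apply/(peirce_space0E e2_idem)].
      by rewrite !mulBr idem_mulK // idem_mul_orthogonal // subrr subr0.
    by rewrite !mulBr idem_mulK // idem_mul_orthogonal // subr0 subrr.
  - exact/(peirce_space1E e1_idem)/idem_mulK.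
  - exact/(peirce_space1E e2_idem)/idem_mulK.
  - by rewrite [_ + mul e1 v]addrAC !subrK.
move=> a b c a' b' c' Pa Pb Pc Pa' Pb' Pc' va va'.
have [e1v e2v] := peirce_components Pa Pb Pc.
have [e1v' e2v'] := peirce_components Pa' Pb' Pc'.
have eb : b = b' by rewrite -e1v -e1v' -va -va'.
have ec : c = c' by rewrite -e2v -e2v' -va -va'.
by split=> //; apply: (addIr b); apply: (addIr c); rewrite -va eb ec -va'.
Qed.

End OrthogonalIdempotents.
End Admissible.
End BilinearProduct.

Theorem mainTheorem7 (K : fieldType) (V : lmodType K) (mul : V -> V -> V)
  (e1 e2 : V) :
  2 \notin [pchar K] -> 3 \notin [pchar K] ->
  admissible_poisson mul ->
  is_idempotent mul e1 -> is_idempotent mul e2 -> e1 != 0 -> e2 != 0 ->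
  mul e1 e2 = 0 -> mul e2 e1 = 0 ->
  let P00 := fun x => peirce_space mul e1 0 x /\ peirce_space mul e2 0 x in
  let P1 := peirce_space mul e1 1 in
  let P2 := peirce_space mul e2 1 in
  [/\ subalgebra mul P00, subalgebra mul P1, subalgebra mul P2
    & direct_sum3 P00 P1 P2].
Proof.
move=> char2 char3 [mul_bilinear mul_admissible] e1_idem e2_idem _ _ e1e2 e2e1.
have two_neq0 : 2%:R != 0 :> K by apply: contra char2 => two0; rewrite inE two0.
have three_neq0 : 3%:R != 0 :> K by apply: contra char3 => three0; rewrite inE three0.
have peirce := peirce_subalgebra mul_bilinear mul_admissible two_neq0 three_neq0.
split.
- exact: subalgebraI (peirce _ e1_idem 0) (peirce _ e2_idem 0).
- exact: peirce _ e1_idem 1.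
- exact: peirce _ e2_idem 1.
- exact (peirce_direct_sum mul_bilinear mul_admissible two_neq0 three_neq0
           e1_idem e2_idem e1e2 e2e1).
Qed.
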